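(* Let $G=\mathrm{SL}_2(q)$ with $q$ even, and let $\mathcal{C}$ be the conjugacy class of an involution. Then $\mathcal{K}(G,\mathcal{C})$ equals the commuting graph on $\mathcal{C}$, and $K_{\mathcal{C}}$ is reducible and non-degenerate.
   Context: For a finite group $G$ and a subset $\mathcal{C}\subseteq G\setminus\{1\}$ closed under conjugation, the Killing form $K_{\mathcal{C}}$ is the bilinear form on the complex vector space with basis $\mathcal{C}$ given on basis elements by $K_{\mathcal{C}}(a,b)=|C_G(ab)\cap\mathcal{C}|$; it is non-degenerate if the matrix $(K_{\mathcal{C}}(a,b))_{a,b\in\mathcal{C}}$ is invertible. $\mathcal{K}(G,\mathcal{C})$ is the graph with vertex set $\mathcal{C}$ in which distinct $a,b$ are adjacent iff $C_G(ab)\cap\mathcal{C}\neq\emptyset$. $K_{\mathcal{C}}$ is irreducible if $\mathcal{K}(G,\mathcal{C})$ is connected and reducible otherwise. The commuting graph on $\mathcal{C}$ has vertex set $\mathcal{C}$, with distinct $a,b$ adjacent iff $ab=ba$. *)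

From HB Require Import structures.
From mathcomp Require Import all_boot all_order all_fingroup all_algebra all_field.
From mathcomp Require Import ssralg matrix algC.
Set Implicit Arguments. Unset Strict Implicit. Unset Printing Implicit Defensive.
Import GRing.Theory.

Local Open Scope group_scope.

Definition SL2 (F : finFieldType) : {set {'GL_2[F]}} :=
  [set g : {'GL_2[F]} | (\det (GLval g) == 1)%R].

Section KillingForm.
Variables (gT : finGroupType) (G C : {set gT}).

Definition killing_val (a b : gT) : nat := #|'C_G[a * b] :&: C|.

Definition killing_matrix : 'M[algC]_#|C| :=
  \matrix_(i, j) ((killing_val (enum_val i) (enum_val j))%:R)%R.

Definition killing_nondegenerate : bool := (\det killing_matrix != 0)%R.

Definition killing_adj (a b : gT) : bool :=
  [&& a \in C, b \in C, a != b & 'C_G[a * b] :&: C != set0].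

Definition commuting_adj (a b : gT) : bool :=
  [&& a \in C, b \in C, a != b & a * b == b * a].

Definition killing_graph_connected : bool :=
  [forall a in C, forall b in C, connect killing_adj a b].

Definition killing_irreducible : bool := killing_graph_connected.
Definition killing_reducible : bool := ~~ killing_graph_connected.

End KillingForm.

From mathcomp Require Import all_boot all_order all_fingroup all_algebra all_field.
From mathcomp Require Import ssralg matrix algC.
From mathcomp Require Import ring.
Set Implicit Arguments. Unset Strict Implicit. Unset Printing Implicit Defensive.
Import GRing.Theory Num.Theory.

(* In characteristic 2 an involution x <> 1 of SL_2 is 1 + N with N a nonzero
   square-zero matrix. Its centralizer in GL_2 is the commutative algebra
   F[N] = {a + bN}, and inside SL_2 it consists of involutions, because
   (a + bN)^2 = a^2 and det (a + bN)^2 = a^4 = 1 forces a = 1. Hence commuting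
   is an equivalence relation on the class C of t, and c in C centralizes ab
   only if ab is an involution, i.e. only if a and b commute: the Killing graph
   is the commuting graph. Its components are the commuting classes, which are
   proper since some conjugate of t does not commute with t. Finally, up to
   reordering C, the Killing matrix is block diagonal with blocks
   (|C| - m) I + m J, where m < |C| is the size of the block; their eigenvalues
   |C| - m and |C| - m + m^2 are nonzero. *)

Section Matrix2.
Variable F : fieldType.
Local Open Scope ring_scope.

Lemma mulmx2E (A B : 'M[F]_2) i j : (A *m B) i j = A i 0 * B 0 j + A i 1 * B 1 j.
Proof.
rewrite mxE !big_ord_recl big_ord0 addr0.
by have -> : lift ord0 ord0 = 1 :> 'I_2 by apply: val_inj.
Qed.

Lemma mx2_eqP (A B : 'M[F]_2) :
  A = B <-> [/\ A 0 0 = B 0 0, A 0 1 = B 0 1, A 1 0 = B 1 0 & A 1 1 = B 1 1].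
Proof.
split=> [-> // | [e00 e01 e10 e11]].
have ord2 (i : 'I_2) : i = 0 \/ i = 1.
  by case: i => -[|[|//]] ?; [left | right]; apply: val_inj.
by apply/matrixP => i j; case: (ord2 i) => ->; case: (ord2 j) => ->.
Qed.

Lemma square_zero_mx2_offdiag (N : 'M[F]_2) :
  N != 0 -> N *m N = 0 -> N 0 1 != 0 \/ N 1 0 != 0.
Proof.
move=> nzN /mx2_eqP[]; rewrite !mulmx2E !mxE => e00 _ _ e11.
have [N01|] := eqVneq (N 0 1) 0; last by left.
have [N10|] := eqVneq (N 1 0) 0; last by right.
have sqr0 (x : F) : x * x = 0 -> x = 0 by move/eqP; rewrite mulf_eq0 orbb => /eqP.
case/eqP: nzN; apply/mx2_eqP; rewrite !mxE; split=> //; apply: sqr0.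
  by move: e00; rewrite N01 mul0r addr0.
by move: e11; rewrite N10 mul0r add0r.
Qed.

Lemma cent_square_zero_mx2 (N Z : 'M[F]_2) :
  N != 0 -> N *m N = 0 -> comm_mx Z N -> exists a b, Z = a%:M + b *: N.
Proof.
move=> nzN NN ZN.
wlog q0 : N Z nzN NN ZN / N 0 1 != 0.
  move=> main; have [|N10] := square_zero_mx2_offdiag nzN NN; first exact: main.
  have [a [b ZtE]] : exists a b, Z^T = a%:M + b *: N^T.
    apply: main; last by rewrite mxE.
  - by rewrite trmx_eq0.
  - by rewrite -trmx_mul NN trmx0.
  - by rewrite /comm_mx -!trmx_mul ZN.
  by exists a, b; apply: trmx_inj; rewrite ZtE linearD linearZ /= tr_scalar_mx.
have /mx2_eqP[_ NN01 _ _] := NN; have /mx2_eqP[ZN00 ZN01 _ _] := ZN.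
rewrite !mulmx2E !mxE in NN01 ZN00 ZN01.
have N11E : N 1 1 = - N 0 0.
  apply/eqP; rewrite -addr_eq0 addrC; apply/eqP/(mulfI q0).
  by rewrite mulr0 -NN01 mulrDr mulrC.
have Z10E : Z 1 0 = Z 0 1 * N 1 0 / N 0 1.
  apply: (mulfI q0); rewrite [RHS]mulrC divfK //.
  by apply: (addrI (N 0 0 * Z 0 0)); rewrite -ZN00 mulrC.
have Z11E : Z 1 1 = Z 0 0 - (Z 0 1 * N 0 0 *+ 2) / N 0 1.
  apply: (mulfI q0); apply: (addrI (N 0 0 * Z 0 1)); rewrite -ZN01 N11E.
  by field.
exists (Z 0 0 - Z 0 1 / N 0 1 * N 0 0), (Z 0 1 / N 0 1).
by apply/mx2_eqP; rewrite !mxE /= Z10E Z11E N11E; split; field.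
Qed.

Lemma cent_square_zero_mx2_comm (N Y Z : 'M[F]_2) :
  N != 0 -> N *m N = 0 -> comm_mx Y N -> comm_mx Z N -> comm_mx Y Z.
Proof.
move=> nzN NN YN /(cent_square_zero_mx2 nzN NN)[c [d ->]].
apply: comm_mxD; first exact: comm_mx_scalar.
by rewrite /comm_mx -scalemxAr -scalemxAl YN.
Qed.

Section Char2.
Hypothesis pchar2 : 2 \in [pchar F].

Lemma sqrf_inj_pchar2 (x y : F) : x ^+ 2 = y ^+ 2 -> x = y.
Proof.
move=> xy; apply/eqP; rewrite -subr_eq0 -sqrf_eq0 sqrrB (mulrn_pchar pchar2).
by rewrite subr0 xy (addrr_pchar2 pchar2).
Qed.

Lemma mx_mulr2n_pchar2 m n (A : 'M[F]_(m, n)) : A *+ 2 = 0.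
Proof. by rewrite -scaler_nat (pcharf0 pchar2) scale0r. Qed.

Lemma involutive_mx_sub1_sqr n (X : 'M[F]_n) :
  X *m X = 1%:M -> (X - 1%:M) *m (X - 1%:M) = 0.
Proof.
move=> XX; rewrite mulmxBl !mulmxBr !mulmx1 mul1mx XX opprB -mulr2n.
exact: mx_mulr2n_pchar2.
Qed.

Lemma cent_square_zero_det1_mx2_involutive (N Z : 'M[F]_2) :
  N != 0 -> N *m N = 0 -> comm_mx Z N -> \det Z = 1 -> Z *m Z = 1%:M.
Proof.
move=> nzN NN /(cent_square_zero_mx2 nzN NN)[a [b ->]] detZ.
have ZZ : (a%:M + b *: N) *m (a%:M + b *: N) = (a ^+ 2)%:M.
  rewrite mulmxDl !mulmxDr -scalar_mxM mul_scalar_mx mul_mx_scalar.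
  rewrite -scalemxAl -scalemxAr NN !scaler0 addr0 -addrA -mulr2n.
  by rewrite mx_mulr2n_pchar2 addr0 expr2.
have a2 : a ^+ 2 = 1.
  by apply: sqrf_inj_pchar2; rewrite expr1n -det_scalar -ZZ det_mulmx detZ mulr1.
by rewrite ZZ a2.
Qed.

Lemma involutive_mx2_diag (X : 'M[F]_2) : X *m X = 1%:M -> X 0 0 = X 1 1.
Proof.
case/mx2_eqP; rewrite !mulmx2E !mxE /= => XX00 _ _ XX11.
apply: sqrf_inj_pchar2; apply: (addIr (X 0 1 * X 1 0)).
by rewrite !expr2 XX00 [X 0 1 * _]mulrC addrC XX11.
Qed.

Lemma exists_noncomm_conj_mx2 (X : 'M[F]_2) :
  X *m X = 1%:M -> X != 1%:M ->
  exists2 P : 'M[F]_2, P *m P = 1%:M & ~ comm_mx X (P *m X *m P).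
Proof.
move=> XX X1; have X11E := involutive_mx2_diag XX.
have comm01 Y : comm_mx X Y -> X 0 1 * Y 1 0 = Y 0 1 * X 1 0.
  by case/mx2_eqP; rewrite !mulmx2E [X 0 0 * _]mulrC => /addrI.
have [X10E|X01_neq] := eqVneq (X 0 1) (X 1 0); last first.
  (* Conjugating by the swap matrix exchanges X 0 1 and X 1 0; when they agree,
     conjugate by a transvection instead. *)
  exists (\matrix_(i, j) (i != j :> nat)%:R).
    by apply/mx2_eqP; rewrite !mulmx2E !mxE /=; split; ring.
  move/comm01; rewrite !mulmx2E !mxE /= !(mul0r, mul1r, mulr0, mulr1, addr0, add0r).
  by rewrite -!expr2 => /sqrf_inj_pchar2/eqP; rewrite (negPf X01_neq).
exists (\matrix_(i, j) (i <= j)%N%:R).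
  apply/mx2_eqP; rewrite !mulmx2E !mxE /=; split; try ring.
  by rewrite mul1r (addrr_pchar2 pchar2).
move/comm01; rewrite !mulmx2E !mxE /= !(mul0r, mul1r, mulr0, mulr1, addr0, add0r).
rewrite -X10E -X11E [X 0 1 + X 0 0]addrC (addrr_pchar2 pchar2) mul0r => /eqP.
rewrite mulf_eq0 orbb => /eqP X01_0.
have /mx2_eqP[XX00 _ _ _] := XX.
rewrite mulmx2E mxE -X10E X01_0 mul0r addr0 in XX00.
have X00_1 : X 0 0 = 1 by apply: sqrf_inj_pchar2; rewrite expr1n expr2.
by case/eqP: X1; apply/mx2_eqP; rewrite !mxE /= -X11E -X10E X01_0 X00_1.
Qed.

End Char2.

End Matrix2.

Section EquivBlockMatrix.
Local Open Scope ring_scope.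
Variables (R : numFieldType) (n N : nat) (E : rel 'I_n).
Hypotheses (E_refl : reflexive E) (E_sym : symmetric E) (E_trans : transitive E).
Hypothesis E_lt : forall i, (#|E i| < N)%N.

Definition equiv_block_mx : 'M[R]_n :=
  \matrix_(i, j) (if i == j then N else if E i j then #|E i| else 0)%:R.

Lemma card_equiv_class_eq i j : E i j -> #|E i| = #|E j|.
Proof.
move=> Eij; apply: eq_card => k; apply/idP/idP; last exact: E_trans.
by apply: E_trans; rewrite E_sym.
Qed.

Lemma det_equiv_block_mx_neq0 : \det equiv_block_mx != 0.
Proof.
apply/det0P => -[v nz_v vM0]; case/eqP: nz_v; apply/rowP => k; rewrite mxE.
(* Summing the column equations over the class of k gives
   (N - m + m ^ 2) S k = 0, where S k is the sum of v over that class. *)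
pose S j := \sum_(i | E i j) v 0 i.
have S_eq j : E j k -> S j = S k.
  move=> Ejk; apply: eq_bigl => i.
  apply/idP/idP => [Eij|Eik]; first exact: E_trans Ejk.
  by apply: E_trans Eik _; rewrite E_sym.
have col j : (N - #|E j|)%:R * v 0 j + #|E j|%:R * S j = 0.
  have Mij i : equiv_block_mx i j =
      (i == j)%:R * (N - #|E j|)%:R + (E i j)%:R * #|E j|%:R.
    rewrite mxE; have [->|_] := eqVneq i j.
      by rewrite E_refl !mul1r -natrD subnK // ltnW.
    rewrite mul0r add0r; case: ifP => Eij; last by rewrite mul0r.
    by rewrite mul1r (card_equiv_class_eq Eij).
  have := congr1 (fun w : 'rV_n => w 0 j) vM0; rewrite !mxE => <-.
  under eq_bigr do rewrite Mij mulrDr.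
  rewrite big_split /=; congr (_ + _).
    rewrite (bigD1 j) //= eqxx mul1r mulrC big1 ?addr0 // => i /negPf->.
    by rewrite mul0r mulr0.
  rewrite /S mulr_sumr big_mkcond /=; apply: eq_bigr => i _.
  by case: (E i j); rewrite ?mul1r ?mul0r ?mulr0 // mulrC.
have S_k0 : S k = 0.
  have : \sum_(j | E j k) ((N - #|E j|)%:R * v 0 j + #|E j|%:R * S j) = 0.
    by apply: big1 => j _; apply: col.
  rewrite big_split /= (eq_bigr (fun j => (N - #|E k|)%:R * v 0 j)); last first.
    by move=> j /card_equiv_class_eq->.
  rewrite -mulr_sumr -/(S k) (eq_bigr (fun=> #|E k|%:R * S k)); last first.
    by move=> j Ejk; rewrite (card_equiv_class_eq Ejk) S_eq.
  rewrite sumr_const (eq_card (E_sym^~ k)) -mulrnAl -mulrnA -mulrDl -natrD.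
  move/eqP; rewrite mulf_eq0 pnatr_eq0 addn_eq0 subn_eq0 leqNgt E_lt /=.
  by move/eqP.
have /eqP := col k; rewrite S_k0 mulr0 addr0 mulf_eq0 pnatr_eq0 subn_eq0 leqNgt E_lt.
by move/eqP.
Qed.

End EquivBlockMatrix.

Lemma invg_sqr1 (T : finGroupType) (x : T) : (x * x = 1 -> x^-1 = x)%g.
Proof. by move=> xx; apply/eqP; rewrite eq_invg_mul xx. Qed.

Lemma card_enum_val_preim (T : finType) (A B : {set T}) :
  #|[pred i : 'I_#|A| | enum_val i \in B]| = #|B :&: A|.
Proof.
rewrite -(card_imset _ enum_val_inj); apply: eq_card => y.
rewrite in_setI; apply/imsetP/andP => [[i iB ->] | [yB yA]].
  by split; [exact: iB | exact: enum_valP].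
by exists (enum_rank_in yA y); rewrite ?inE enum_rankK_in.
Qed.

Section SL2Involutions.
Variable F : finFieldType.
Hypothesis pchar2 : (2 \in [pchar F])%R.
Local Notation gT := {'GL_2[F]}.
Local Open Scope ring_scope.
Local Open Scope group_scope.

Lemma SL2_group_set : group_set (SL2 F).
Proof.
apply/group_setP; split=> [|x y]; first by rewrite inE GL_1E det1.
by rewrite !inE GL_MxE det_mulmx => /eqP -> /eqP ->; rewrite mulr1.
Qed.

Canonical SL2_group := group SL2_group_set.

Lemma commute_GLP (x y : gT) : commute x y <-> comm_mx (GLval x) (GLval y).
Proof. by split=> [/(congr1 GLval) | ?]; last exact: val_inj. Qed.

Lemma involutive_GLP (x : gT) : x * x = 1 <-> GLval x *m GLval x = 1%:M.
Proof. by split=> [/(congr1 GLval) | ?]; last exact: val_inj. Qed.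

Lemma GLval_eq1 (x : gT) : (GLval x == 1%:M) = (x == 1).
Proof. exact: (inj_eq val_inj). Qed.

Lemma involution_GL_sub1_square_zero (x : gT) : x * x = 1 -> x != 1 ->
  GLval x - 1%:M != 0 /\ (GLval x - 1%:M) *m (GLval x - 1%:M) = 0.
Proof.
move=> /involutive_GLP xx x1; split; first by rewrite subr_eq0 GLval_eq1.
exact: involutive_mx_sub1_sqr.
Qed.

Lemma commute_GL_sub1 (x y : gT) :
  commute x y -> comm_mx (GLval y) (GLval x - 1%:M).
Proof.
by move/commute_GLP/comm_mx_sym => yx; apply: comm_mxB => //; apply: comm_mx1.
Qed.

Lemma cent_involution_GL2_comm (x y z : gT) :
  x * x = 1 -> x != 1 -> commute x y -> commute x z -> commute y z.
Proof.
move=> xx x1 /commute_GL_sub1 yN /commute_GL_sub1 zN; apply/commute_GLP.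
have [nzN NN] := involution_GL_sub1_square_zero xx x1.
exact: cent_square_zero_mx2_comm nzN NN yN zN.
Qed.

Lemma cent_involution_SL2_involutive (x y : gT) :
  x * x = 1 -> x != 1 -> y \in SL2 F -> commute x y -> y * y = 1.
Proof.
move=> xx x1; rewrite inE => /eqP detY /commute_GL_sub1 yN; apply/involutive_GLP.
have [nzN NN] := involution_GL_sub1_square_zero xx x1.
exact: cent_square_zero_det1_mx2_involutive nzN NN yN detY.
Qed.

Lemma involution_SL2_noncomm_conj (x : gT) :
  x * x = 1 -> x != 1 -> exists2 g, g \in SL2 F & ~ commute x (x ^ g).
Proof.
move=> /involutive_GLP xx; rewrite -GLval_eq1 => x1.
have [P PP ncomm] := exists_noncomm_conj_mx2 pchar2 xx x1.
have [Punit _] := mulmx1_unit PP.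
pose g : gT := FinRing.Unit (Punit : (P : 'M[F]_(2.-1.+1)) \is a GRing.unit).
have gV : g^-1 = g by apply/invg_sqr1/involutive_GLP.
exists g.
  rewrite inE; apply/eqP/(sqrf_inj_pchar2 pchar2).
  by rewrite expr1n expr2 -det_mulmx PP det1.
by rewrite commute_GLP conjgE gV !GL_MxE mulmxA.
Qed.

End SL2Involutions.

Section InvolutionClass.
Variables (F : finFieldType) (t : {'GL_2[F]}).
Hypotheses (pchar2 : (2 \in [pchar F])%R) (tG : t \in SL2 F).
Hypotheses (tt : (t * t = 1)%g) (t1 : t != 1%g).
Local Open Scope group_scope.
Local Notation G := (SL2 F).
Local Notation C := (t ^: SL2 F).

Lemma class_involution a : a \in C -> a * a = 1 /\ a != 1.
Proof. by case/imsetP => g _ ->; rewrite -conjMg tt conj1g conjg_eq1. Qed.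

Lemma class_sub_SL2 : C \subset G.
Proof. exact: class_subG tG (subxx _). Qed.

Lemma class_noncomm a : a \in C -> exists2 b, b \in C & ~ commute a b.
Proof.
move=> aC; have [aa a1] := class_involution aC.
have [g gG ncomm] := involution_SL2_noncomm_conj pchar2 aa a1.
by exists (a ^ g) => //; rewrite -(class_eqP aC) memJ_class.
Qed.

Lemma class_commute_of_cent_mul a b c :
  a \in C -> b \in C -> c \in C -> commute c (a * b) -> commute a b.
Proof.
move=> aC bC cC cab; have [cc c1] := class_involution cC.
have abG : a * b \in G by rewrite groupM // (subsetP class_sub_SL2).
have abV := invg_sqr1 (cent_involution_SL2_involutive pchar2 cc c1 abG cab).
have [/invg_sqr1 aV _] := class_involution aC.
have [/invg_sqr1 bV _] := class_involution bC.
by rewrite /commute -{1}abV invMg aV bV.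
Qed.

Lemma killing_adj_commuting : killing_adj G C =2 commuting_adj C.
Proof.
move=> a b; apply/and4P/and4P => -[aC bC ab].
  case/set0Pn => c /setIP[/setIP[_ /cent1P cab] cC]; split=> //.
  exact/eqP/(class_commute_of_cent_mul aC bC cC cab).
move/eqP => comm_ab; split=> //; apply/set0Pn; exists a.
rewrite !in_setI aC (subsetP class_sub_SL2 _ aC) andbT /=; apply/cent1P.
by rewrite /commute -mulgA -comm_ab.
Qed.

Lemma killing_reducible_class : killing_reducible G C.
Proof.
have tC : t \in C := class_refl _ t.
have [b bC ncomm] := class_noncomm tC.
have adj_sym : connect_sym (killing_adj G C).
  apply: sym_connect_sym => x y; rewrite !killing_adj_commuting.
  by rewrite /commuting_adj andbCA eq_sym [y * x == _]eq_sym.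
have closed_cent : closed (killing_adj G C) 'C[t].
  apply: intro_closed => // x y; rewrite killing_adj_commuting.
  case/and4P => xC _ _ /eqP xy /cent1P xt; apply/cent1P/commute_sym.
  have [xx x1] := class_involution xC.
  exact: cent_involution_GL2_comm xx x1 xt xy.
apply/negP => /forall_inP/(_ t tC)/forall_inP/(_ b bC).
move/(closed_connect closed_cent).
by rewrite cent1id => /esym/cent1P/commute_sym.
Qed.

Lemma class_cent_mul a b : a \in C -> b \in C -> a != b -> commute a b ->
  'C_G[a * b] :&: C = 'C[a] :&: C.
Proof.
move=> aC bC ab comm_ab; have [aa a1] := class_involution aC.
have [bb _] := class_involution bC.
have abab : a * b * (a * b) = 1.
  by rewrite {2}comm_ab mulgA -(mulgA a) bb mulg1 aa.
have ab1 : a * b != 1 by rewrite -eq_invg_mul (invg_sqr1 aa).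
have comm_a_ab : commute a (a * b) by rewrite /commute -mulgA -comm_ab.
apply/setP => y; rewrite !in_setI; case yC: (y \in C); rewrite ?andbF //.
rewrite (subsetP class_sub_SL2 _ yC) !andbT; apply/cent1P/cent1P => [yab | ya].
  have := commute_sym comm_a_ab.
  exact: cent_involution_GL2_comm abab ab1 (commute_sym yab).
exact: cent_involution_GL2_comm aa a1 (commute_sym ya) comm_a_ab.
Qed.

Lemma killing_val_class a b : a \in C -> b \in C ->
  killing_val G C a b =
    if a == b then #|C| else if b \in 'C[a] then #|'C[a] :&: C| else 0.
Proof.
move=> aC bC; rewrite /killing_val; have [<-|ab] := eqVneq.
  have [aa _] := class_involution aC.
  by rewrite aa cent11T setIT (setIidPr class_sub_SL2).
case: ifP => /cent1P ba; first by rewrite class_cent_mul // commute_sym.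
apply/eqP; rewrite cards_eq0 -subset0; apply/subsetP => c.
rewrite !in_setI => /andP[/andP[_ /cent1P cab] cC].
by case: ba; apply/commute_sym/(class_commute_of_cent_mul aC bC cC cab).
Qed.

Lemma killing_nondegenerate_class : killing_nondegenerate G C.
Proof.
pose E := [rel i j : 'I_#|C| | enum_val j \in 'C[enum_val i]].
have E_refl : reflexive E by move=> i; apply: cent1id.
have E_sym : symmetric E by move=> i j; apply: cent1C.
have E_trans : transitive E.
  move=> j i k /cent1P ji /cent1P kj; apply/cent1P.
  have [jj j1] := class_involution (enum_valP j).
  exact: cent_involution_GL2_comm jj j1 (commute_sym kj) ji.
have cardE i : #|E i| = #|'C[enum_val i] :&: C| by apply: card_enum_val_preim.
have E_lt i : (#|E i| < #|C|)%N.
  rewrite cardE; apply: proper_card; apply/properP; split; first exact: subsetIr.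
  have [b bC ncomm] := class_noncomm (enum_valP i).
  by exists b => //; rewrite in_setI bC andbT; apply/cent1P => /commute_sym.
rewrite /killing_nondegenerate (_ : killing_matrix _ _ = equiv_block_mx _ #|C| E).
  exact: det_equiv_block_mx_neq0 E_refl E_sym E_trans E_lt.
apply/matrixP => i j; rewrite !mxE killing_val_class ?enum_valP //.
by rewrite (inj_eq enum_val_inj) cardE.
Qed.

End InvolutionClass.

Theorem proposition3p3 (F : finFieldType) (t : {'GL_2[F]}) :
  (2%N \in [pchar F])%R ->
  t \in SL2 F -> #[t]%g = 2 ->
  let C := (t ^: SL2 F)%g in
  killing_adj (SL2 F) C =2 commuting_adj C /\
  killing_reducible (SL2 F) C /\
  killing_nondegenerate (SL2 F) C.
Proof.
move=> pchar2 tG ord_t C.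
have tt : (t * t = 1)%g by have := expg_order t; rewrite ord_t expgS expg1.
have t1 : t != 1%g by apply: contra_eqN ord_t => /eqP ->; rewrite order1.
split; first exact: killing_adj_commuting.
by split; [exact: killing_reducible_class | exact: killing_nondegenerate_class].
Qed.
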